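(* Let $\widehat A=\mathbb{C}[[x,y,z]]$ and let $F=(f,g,h)$ and $F'=(f',g',h')$ be Poisson triples on $\widehat A$ with $f_{000}\neq 0$. If $f_{ijk}=f'_{ijk}$ and $h_{ijk}=h'_{ijk}$ for all $i,j,k\in\mathbb{N}_0$ and $g_{ij0}=g'_{ij0}$ for all $i,j\in\mathbb{N}_0$, then $F=F'$.
   Context: For $f\in\widehat A$, $f_{ijk}$ denotes the coefficient of $x^iy^jz^k$. $F=(f,g,h)\in\widehat A^3$ is a Poisson triple if there is a Poisson bracket on $\widehat A$ (Lie bracket with each $\{b,-\}$ a $\mathbb{C}$-derivation) such that $\{y,z\}=f$, $\{z,x\}=g$, $\{x,y\}=h$. *)

From mathcomp Require Import all_boot all_algebra.
From mathcomp Require Import complex.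
From mathcomp Require Import reals Rstruct.
Import GRing.Theory.
Set Implicit Arguments. Unset Strict Implicit. Unset Printing Implicit Defensive.
Local Open Scope ring_scope.

Definition CC : Type := complex Rdefinitions.R.

(* Ahat = C[[x,y,z]]: a formal power series is its coefficient function;
   [f i j k] is the coefficient f_{ijk} of x^i y^j z^k. *)
Definition ps : Type := nat -> nat -> nat -> CC.

Definition ps_add (f g : ps) : ps := fun i j k => f i j k + g i j k.
Definition ps_opp (f : ps) : ps := fun i j k => - f i j k.
Definition ps_zero : ps := fun _ _ _ => 0.
Definition ps_scale (c : CC) (f : ps) : ps := fun i j k => c * f i j k.
Definition ps_mul (f g : ps) : ps := fun i j k =>
  \sum_(a < i.+1) \sum_(b < j.+1) \sum_(c < k.+1)
     f a b c * g (i - a)%N (j - b)%N (k - c)%N.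

Definition ps_x : ps := fun i j k => if [&& i == 1%N, j == 0%N & k == 0%N] then 1 else 0.
Definition ps_y : ps := fun i j k => if [&& i == 0%N, j == 1%N & k == 0%N] then 1 else 0.
Definition ps_z : ps := fun i j k => if [&& i == 0%N, j == 0%N & k == 1%N] then 1 else 0.

Definition is_poisson_bracket (br : ps -> ps -> ps) : Prop :=
  (forall a u v, br (ps_add u v) a = ps_add (br u a) (br v a)) /\
  (forall a c u, br (ps_scale c u) a = ps_scale c (br u a)) /\
  (forall a u v, br a (ps_add u v) = ps_add (br a u) (br a v)) /\
  (forall a c u, br a (ps_scale c u) = ps_scale c (br a u)) /\
  (forall u, br u u = ps_zero) /\
  (forall a b c, ps_add (br a (br b c)) (ps_add (br b (br c a)) (br c (br a b)))
                 = ps_zero) /\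
  (forall a u v, br a (ps_mul u v) = ps_add (ps_mul (br a u) v) (ps_mul u (br a v))).

Definition poisson_triple (f g h : ps) : Prop :=
  exists br, is_poisson_bracket br /\
    [/\ br ps_y ps_z = f, br ps_z ps_x = g & br ps_x ps_y = h].

From mathcomp Require Import all_boot all_algebra.
From mathcomp Require Import complex.
From mathcomp Require Import reals Rstruct.
From mathcomp Require Import ring zify.
From Stdlib Require Import FunctionalExtensionality.
Import GRing.Theory Num.Theory.
Local Open Scope ring_scope.

(* With the chain rule {a, u} = {a, x} ∂x u + {a, y} ∂y u + {a, z} ∂z u, valid
   for every derivation of C[[x, y, z]] (induction on total degree after
   splitting u = u_000 + x A + y B + z C), the Jacobi identity for x, y, z reads
     f ∂z g - h ∂x g + (∂x h - ∂z f) g = f ∂y h - h ∂y f,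
   a first-order linear equation for g once f and h are fixed.  So e = g - g'
   solves the homogeneous equation, whose coefficient at x^i y^j z^k is
   f_000 (k+1) e_{i,j,k+1} plus coefficients of e of smaller z-degree, or of
   z-degree k+1 and smaller degree in x, y.  As f_000 <> 0 and e vanishes in
   z-degree 0, induction on (k, i + j) gives e = 0. *)

Lemma ps_ext (u v : ps) : (forall i j k, u i j k = v i j k) -> u = v.
Proof.
move=> uv; do 3![apply: functional_extensionality => ?]; exact: uv.
Qed.

Lemma sum_ord_supp1 n p (F : 'I_n.+1 -> CC) :
  (forall a : 'I_n.+1, (a : nat) != p -> F a = 0) ->
  \sum_(a < n.+1) F a = if (p <= n)%N then F (inord p) else 0.
Proof.
move=> F0; case: leqP => [pn | np]; last first.
  by apply: big1 => a _; apply: F0; rewrite neq_ltn (leq_trans (ltn_ord a)).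
rewrite (bigD1 (inord p)) //= big1 ?addr0 // => a ap; apply: F0.
by apply: contra ap => /eqP ap; apply/eqP/val_inj; rewrite /= inordK ?ap.
Qed.

Definition ps_monomial (p q r : nat) : ps :=
  fun i j k => if [&& i == p, j == q & k == r] then 1 else 0.

Definition ps_one : ps := ps_monomial 0 0 0.

Lemma ps_mul_monomial p q r Q i j k :
  ps_mul (ps_monomial p q r) Q i j k =
  if [&& p <= i, q <= j & r <= k]%N then Q (i - p)%N (j - q)%N (k - r)%N else 0.
Proof.
rewrite /ps_mul /ps_monomial (@sum_ord_supp1 _ p) => [|a /negbTE ap]; last first.
  by rewrite big1 // => b _; rewrite big1 // => c _; rewrite ap mul0r.
rewrite (@sum_ord_supp1 _ q) => [|b /negbTE bq]; last first.
  by rewrite big1 // => c _; rewrite bq andbF mul0r.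
rewrite (@sum_ord_supp1 _ r) => [|c /negbTE cr]; last by rewrite cr !andbF mul0r.
case: (boolP (p <= i)%N) => pi; case: (boolP (q <= j)%N) => qj;
  case: (boolP (r <= k)%N) => rk; [|by []..].
by rewrite !inordK ?ltnS // !eqxx mul1r.
Qed.

Lemma ps_mulC u v : ps_mul u v = ps_mul v u.
Proof.
apply: ps_ext => i j k; rewrite /ps_mul (reindex_inj rev_ord_inj).
apply: eq_bigr => a _; rewrite (reindex_inj rev_ord_inj).
apply: eq_bigr => b _; rewrite (reindex_inj rev_ord_inj).
apply: eq_bigr => c _.
have rev_sub n (e : 'I_n.+1) : (rev_ord e : nat) = (n - e)%N := subSS e n.
by rewrite !rev_sub !subKn ?leq_ord // mulrC.
Qed.

Definition ps_shx (u : ps) : ps := fun i j k => if i is i'.+1 then u i' j k else 0.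
Definition ps_shy (u : ps) : ps := fun i j k => if j is j'.+1 then u i j' k else 0.
Definition ps_shz (u : ps) : ps := fun i j k => if k is k'.+1 then u i j k' else 0.

Lemma ps_mul1 u : ps_mul ps_one u = u.
Proof. by apply: ps_ext => i j k; rewrite ps_mul_monomial !subn0. Qed.

Lemma ps_mulx u : ps_mul ps_x u = ps_shx u.
Proof. by apply: ps_ext => -[|i] j k; rewrite ps_mul_monomial ?subn0 ?subn1. Qed.

Lemma ps_muly u : ps_mul ps_y u = ps_shy u.
Proof. by apply: ps_ext => i [|j] k; rewrite ps_mul_monomial ?subn0 ?subn1. Qed.

Lemma ps_mulz u : ps_mul ps_z u = ps_shz u.
Proof.
by apply: ps_ext => i j [|k]; rewrite ps_mul_monomial ?subn0 ?subn1 ?andbF.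
Qed.

Lemma ps_mul_shx u v : ps_mul u (ps_shx v) = ps_shx (ps_mul u v).
Proof.
apply: ps_ext => -[|i] j k; rewrite /ps_mul /=.
  by apply: big1 => a _; apply: big1 => b _; apply: big1 => c _; rewrite mulr0.
rewrite big_ord_recr /= subnn [X in _ + X]big1 ?addr0 => [|b _]; last first.
  by apply: big1 => c _; rewrite mulr0.
by apply: eq_bigr => a _; rewrite subSn ?leq_ord.
Qed.

Lemma ps_mul_shy u v : ps_mul u (ps_shy v) = ps_shy (ps_mul u v).
Proof.
apply: ps_ext => i [|j] k; rewrite /ps_mul /=.
  by apply: big1 => a _; apply: big1 => b _; apply: big1 => c _; rewrite mulr0.
apply: eq_bigr => a _; rewrite big_ord_recr /= subnn [X in _ + X]big1 ?addr0.
  by apply: eq_bigr => b _; rewrite subSn ?leq_ord.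
by move=> c _; rewrite mulr0.
Qed.

Lemma ps_mul_shz u v : ps_mul u (ps_shz v) = ps_shz (ps_mul u v).
Proof.
apply: ps_ext => i j [|k]; rewrite /ps_mul /=.
  by apply: big1 => a _; apply: big1 => b _; apply: big1 => c _; rewrite mulr0.
apply: eq_bigr => a _; apply: eq_bigr => b _.
rewrite big_ord_recr /= subnn mulr0 addr0.
by apply: eq_bigr => c _; rewrite subSn ?leq_ord.
Qed.

Lemma ps_mulDr u v w : ps_mul u (ps_add v w) = ps_add (ps_mul u v) (ps_mul u w).
Proof.
apply: ps_ext => i j k; rewrite /ps_mul /ps_add -big_split; apply: eq_bigr => a _.
rewrite -big_split; apply: eq_bigr => b _.
by rewrite -big_split; apply: eq_bigr => c _; rewrite mulrDr.
Qed.

Lemma ps_mulNr u v : ps_mul u (ps_opp v) = ps_opp (ps_mul u v).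
Proof.
apply: ps_ext => i j k; rewrite /ps_mul /ps_opp -sumrN; apply: eq_bigr => a _.
rewrite -sumrN; apply: eq_bigr => b _.
by rewrite -sumrN; apply: eq_bigr => c _; rewrite mulrN.
Qed.

Lemma ps_mul0r u : ps_mul ps_zero u = ps_zero.
Proof.
apply: ps_ext => i j k.
by apply: big1 => a _; apply: big1 => b _; apply: big1 => c _; rewrite mul0r.
Qed.

Lemma ps_mulr0 u : ps_mul u ps_zero = ps_zero.
Proof. by rewrite ps_mulC ps_mul0r. Qed.

Lemma ps_mulDl u v w : ps_mul (ps_add u v) w = ps_add (ps_mul u w) (ps_mul v w).
Proof. by rewrite ps_mulC ps_mulDr !(ps_mulC w). Qed.

Lemma ps_mulNl u v : ps_mul (ps_opp u) v = ps_opp (ps_mul u v).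
Proof. by rewrite ps_mulC ps_mulNr ps_mulC. Qed.

Definition ps_dx (u : ps) : ps := fun i j k => i.+1%:R * u i.+1 j k.
Definition ps_dy (u : ps) : ps := fun i j k => j.+1%:R * u i j.+1 k.
Definition ps_dz (u : ps) : ps := fun i j k => k.+1%:R * u i j k.+1.

Lemma ps_dxD u v : ps_dx (ps_add u v) = ps_add (ps_dx u) (ps_dx v).
Proof. by apply: ps_ext => i j k; rewrite /ps_dx /ps_add mulrDr. Qed.
Lemma ps_dyD u v : ps_dy (ps_add u v) = ps_add (ps_dy u) (ps_dy v).
Proof. by apply: ps_ext => i j k; rewrite /ps_dy /ps_add mulrDr. Qed.
Lemma ps_dzD u v : ps_dz (ps_add u v) = ps_add (ps_dz u) (ps_dz v).
Proof. by apply: ps_ext => i j k; rewrite /ps_dz /ps_add mulrDr. Qed.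

Lemma ps_dxN u : ps_dx (ps_opp u) = ps_opp (ps_dx u).
Proof. by apply: ps_ext => i j k; rewrite /ps_dx /ps_opp mulrN. Qed.
Lemma ps_dzN u : ps_dz (ps_opp u) = ps_opp (ps_dz u).
Proof. by apply: ps_ext => i j k; rewrite /ps_dz /ps_opp mulrN. Qed.

Lemma ps_dx_shx u : ps_dx (ps_shx u) = ps_add u (ps_shx (ps_dx u)).
Proof.
apply: ps_ext => -[|i] j k; rewrite /ps_dx /ps_add /ps_shx ?mul1r ?addr0 //.
by rewrite -addn1 natrD mulrDl mul1r addrC.
Qed.
Lemma ps_dy_shy u : ps_dy (ps_shy u) = ps_add u (ps_shy (ps_dy u)).
Proof.
apply: ps_ext => i [|j] k; rewrite /ps_dy /ps_add /ps_shy ?mul1r ?addr0 //.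
by rewrite -addn1 natrD mulrDl mul1r addrC.
Qed.
Lemma ps_dz_shz u : ps_dz (ps_shz u) = ps_add u (ps_shz (ps_dz u)).
Proof.
apply: ps_ext => i j [|k]; rewrite /ps_dz /ps_add /ps_shz ?mul1r ?addr0 //.
by rewrite -addn1 natrD mulrDl mul1r addrC.
Qed.

Lemma ps_dx_shy u : ps_dx (ps_shy u) = ps_shy (ps_dx u).
Proof. by apply: ps_ext => i [|j] k; rewrite /ps_dx /ps_shy ?mulr0. Qed.
Lemma ps_dx_shz u : ps_dx (ps_shz u) = ps_shz (ps_dx u).
Proof. by apply: ps_ext => i j [|k]; rewrite /ps_dx /ps_shz ?mulr0. Qed.
Lemma ps_dy_shx u : ps_dy (ps_shx u) = ps_shx (ps_dy u).
Proof. by apply: ps_ext => -[|i] j k; rewrite /ps_dy /ps_shx ?mulr0. Qed.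
Lemma ps_dy_shz u : ps_dy (ps_shz u) = ps_shz (ps_dy u).
Proof. by apply: ps_ext => i j [|k]; rewrite /ps_dy /ps_shz ?mulr0. Qed.
Lemma ps_dz_shx u : ps_dz (ps_shx u) = ps_shx (ps_dz u).
Proof. by apply: ps_ext => -[|i] j k; rewrite /ps_dz /ps_shx ?mulr0. Qed.
Lemma ps_dz_shy u : ps_dz (ps_shy u) = ps_shy (ps_dz u).
Proof. by apply: ps_ext => i [|j] k; rewrite /ps_dz /ps_shy ?mulr0. Qed.

Definition ps_cst (c : CC) : ps := ps_scale c ps_one.

Lemma ps_dx_cst c : ps_dx (ps_cst c) = ps_zero.
Proof.
by apply: ps_ext => i j k;
  rewrite /ps_dx /ps_cst /ps_scale /ps_one /ps_monomial /= !mulr0.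
Qed.
Lemma ps_dy_cst c : ps_dy (ps_cst c) = ps_zero.
Proof.
by apply: ps_ext => i j k;
  rewrite /ps_dy /ps_cst /ps_scale /ps_one /ps_monomial /= andbF !mulr0.
Qed.
Lemma ps_dz_cst c : ps_dz (ps_cst c) = ps_zero.
Proof.
by apply: ps_ext => i j k;
  rewrite /ps_dz /ps_cst /ps_scale /ps_one /ps_monomial /= !andbF !mulr0.
Qed.

Definition ps_xpart (u : ps) : ps := fun i j k => u i.+1 j k.
Definition ps_ypart (u : ps) : ps := fun i j k => if i is 0 then u 0 j.+1 k else 0.
Definition ps_zpart (u : ps) : ps :=
  fun i j k => if (i + j)%N is 0 then u 0 0 k.+1 else 0.

Lemma ps_decomp u : u = ps_add (ps_cst (u 0 0 0))
  (ps_add (ps_shx (ps_xpart u)) (ps_add (ps_shy (ps_ypart u)) (ps_shz (ps_zpart u)))).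
Proof.
apply: ps_ext => -[|i] [|j] [|k];
  by rewrite /ps_add /ps_cst /ps_scale /ps_one /ps_monomial /=
       ?mulr1 ?mulr0 ?addr0 ?add0r.
Qed.

Definition ps_chain (D : ps -> ps) (u : ps) : ps :=
  ps_add (ps_mul (D ps_x) (ps_dx u))
    (ps_add (ps_mul (D ps_y) (ps_dy u)) (ps_mul (D ps_z) (ps_dz u))).

Lemma ps_chainD D u v : ps_chain D (ps_add u v) = ps_add (ps_chain D u) (ps_chain D v).
Proof.
rewrite /ps_chain ps_dxD ps_dyD ps_dzD !ps_mulDr.
by apply: ps_ext => i j k; rewrite /ps_add; ring.
Qed.

Lemma ps_chain_cst D c : ps_chain D (ps_cst c) = ps_zero.
Proof.
rewrite /ps_chain ps_dx_cst ps_dy_cst ps_dz_cst !ps_mulr0.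
by apply: ps_ext => i j k; rewrite /ps_add /ps_zero !addr0.
Qed.

Lemma ps_chain_shx D u :
  ps_chain D (ps_shx u) = ps_add (ps_mul (D ps_x) u) (ps_shx (ps_chain D u)).
Proof.
rewrite /ps_chain ps_dx_shx ps_dy_shx ps_dz_shx ps_mulDr !ps_mul_shx.
by apply: ps_ext => -[|i] j k; rewrite /ps_add /ps_shx; ring.
Qed.

Lemma ps_chain_shy D u :
  ps_chain D (ps_shy u) = ps_add (ps_mul (D ps_y) u) (ps_shy (ps_chain D u)).
Proof.
rewrite /ps_chain ps_dx_shy ps_dy_shy ps_dz_shy ps_mulDr !ps_mul_shy.
by apply: ps_ext => i [|j] k; rewrite /ps_add /ps_shy; ring.
Qed.

Lemma ps_chain_shz D u :
  ps_chain D (ps_shz u) = ps_add (ps_mul (D ps_z) u) (ps_shz (ps_chain D u)).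
Proof.
rewrite /ps_chain ps_dx_shz ps_dy_shz ps_dz_shz ps_mulDr !ps_mul_shz.
by apply: ps_ext => i j [|k]; rewrite /ps_add /ps_shz; ring.
Qed.

Section DerivationChainRule.

Variable D : ps -> ps.
Hypothesis D_add : forall u v, D (ps_add u v) = ps_add (D u) (D v).
Hypothesis D_scale : forall c u, D (ps_scale c u) = ps_scale c (D u).
Hypothesis D_mul : forall u v, D (ps_mul u v) = ps_add (ps_mul (D u) v) (ps_mul u (D v)).

Lemma derivation_cst c : D (ps_cst c) = ps_zero.
Proof.
have D1 : D ps_one = ps_zero.
  apply: ps_ext => i j k; have := congr1 (fun w => w i j k) (D_mul ps_one ps_one).
  rewrite ps_mul1 (ps_mulC _ ps_one) ps_mul1 /ps_add => /esym/eqP.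
  by rewrite -subr_eq0 addrK => /eqP.
by rewrite /ps_cst D_scale D1; apply: ps_ext => i j k; rewrite /ps_scale /ps_zero mulr0.
Qed.

Lemma derivation_shx u : D (ps_shx u) = ps_add (ps_mul (D ps_x) u) (ps_shx (D u)).
Proof. by rewrite -ps_mulx D_mul ps_mulx. Qed.
Lemma derivation_shy u : D (ps_shy u) = ps_add (ps_mul (D ps_y) u) (ps_shy (D u)).
Proof. by rewrite -ps_muly D_mul ps_muly. Qed.
Lemma derivation_shz u : D (ps_shz u) = ps_add (ps_mul (D ps_z) u) (ps_shz (D u)).
Proof. by rewrite -ps_mulz D_mul ps_mulz. Qed.

Let defect u : ps := fun i j k => D u i j k - ps_chain D u i j k.

Lemma defect_decomp u : defect u =
  ps_add (ps_shx (defect (ps_xpart u)))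
    (ps_add (ps_shy (defect (ps_ypart u))) (ps_shz (defect (ps_zpart u)))).
Proof.
rewrite /defect {1 2}(ps_decomp u) !D_add !ps_chainD derivation_cst ps_chain_cst.
rewrite derivation_shx derivation_shy derivation_shz.
rewrite ps_chain_shx ps_chain_shy ps_chain_shz.
by apply: ps_ext => -[|i] [|j] [|k];
  rewrite /ps_add /ps_zero /ps_shx /ps_shy /ps_shz; ring.
Qed.

Lemma defect_eq0 u : defect u = ps_zero.
Proof.
suff H n : forall v i j k, (i + j + k < n)%N -> defect v i j k = 0.
  by apply: ps_ext => i j k; apply: (H (i + j + k).+1).
elim: n => [//|n IH] v i j k lt_ijk.
rewrite defect_decomp /ps_add /ps_shx /ps_shy /ps_shz.
by case: i lt_ijk => [|i]; case: j => [|j]; case: k => [|k] => lt_ijk;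
  rewrite ?IH ?addr0 //; lia.
Qed.

Lemma derivation_chain u : D u = ps_chain D u.
Proof.
apply: ps_ext => i j k; have := congr1 (fun w => w i j k) (defect_eq0 u).
by move/eqP; rewrite subr_eq0 => /eqP.
Qed.

End DerivationChainRule.

Section PoissonBracket.

Context {br : ps -> ps -> ps} (br_poisson : is_poisson_bracket br).

Lemma bracket_anti u v : br u v = ps_opp (br v u).
Proof.
have [Dl [_ [Dr [_ [alt _]]]]] := br_poisson.
apply: ps_ext => i j k; have := congr1 (fun w => w i j k) (alt (ps_add u v)).
rewrite Dl !Dr !alt /ps_add /ps_opp /ps_zero add0r addr0 => /eqP.
by rewrite addr_eq0 => /eqP.
Qed.

Lemma bracket_chain a u : br a u = ps_chain (br a) u.
Proof.
have [_ [_ [Dr [Zr [_ [_ Mr]]]]]] := br_poisson.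
exact: (derivation_chain (br a) (Dr a) (Zr a) (Mr a)).
Qed.

End PoissonBracket.

Definition pde_op (p q r u : ps) : ps :=
  ps_add (ps_mul p (ps_dz u)) (ps_add (ps_mul q (ps_dx u)) (ps_mul r u)).

Lemma poisson_triple_pde f g h : poisson_triple f g h ->
  pde_op f (ps_opp h) (ps_add (ps_dx h) (ps_opp (ps_dz f))) g =
  ps_add (ps_mul f (ps_dy h)) (ps_opp (ps_mul h (ps_dy f))).
Proof.
case=> br [br_poisson [ef eg eh]].
have [_ [_ [_ [_ [alt [jac _]]]]]] := br_poisson.
have := jac ps_x ps_y ps_z.
rewrite ef eg eh !(bracket_chain br_poisson) /ps_chain !alt ef eg eh.
rewrite (bracket_anti br_poisson ps_x ps_z) (bracket_anti br_poisson ps_y ps_x).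
rewrite (bracket_anti br_poisson ps_z ps_y) ef eg eh !ps_mul0r !ps_mulNl.
rewrite /pde_op ps_mulDl !ps_mulNl (ps_mulC (ps_dx h)) (ps_mulC (ps_dz f)).
move=> J; apply: ps_ext => i j k; have := congr1 (fun w => w i j k) J.
by rewrite /ps_add /ps_opp /ps_zero => J'; rewrite -[LHS]subr0 -J'; ring.
Qed.

Lemma pde_opB p q r u v :
  pde_op p q r (ps_add u (ps_opp v)) = ps_add (pde_op p q r u) (ps_opp (pde_op p q r v)).
Proof.
rewrite /pde_op ps_dzD ps_dxD ps_dzN ps_dxN !ps_mulDr !ps_mulNr.
by apply: ps_ext => i j k; rewrite /ps_add /ps_opp; ring.
Qed.

Lemma ps_mul_coef_lead u v i j k :
  (forall a b c, (c < k \/ c = k /\ a + b < i + j)%N -> v a b c = 0) ->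
  ps_mul u v i j k = u 0 0 0 * v i j k.
Proof.
move=> v0; rewrite /ps_mul (@sum_ord_supp1 _ 0) => [|a a0]; last first.
  apply: big1 => b _; apply: big1 => c _; rewrite v0 ?mulr0 //.
  by have := ltn_ord a; have := ltn_ord b; have := ltn_ord c; lia.
rewrite (@sum_ord_supp1 _ 0) => [|b b0]; last first.
  apply: big1 => c _; rewrite v0 ?mulr0 //.
  by have := ltn_ord b; have := ltn_ord c; lia.
rewrite (@sum_ord_supp1 _ 0) => [|c c0]; last first.
  by rewrite v0 ?mulr0 //; have := ltn_ord c; lia.
by rewrite !leq0n !inordK // !subn0.
Qed.

Lemma ps_mul_coef_eq0 u v i j k :
  (forall a b c, (c <= k)%N -> v a b c = 0) -> ps_mul u v i j k = 0.
Proof.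
move=> v0; rewrite (ps_mul_coef_lead u v) ?v0 ?mulr0 // => a b c lt_c.
by apply: v0; case: lt_c => [/ltnW | [-> _]].
Qed.

Lemma pde_op_eq0 {p q r d : ps} : p 0 0 0 != 0 -> (forall i j, d i j 0 = 0) ->
  pde_op p q r d = ps_zero -> d = ps_zero.
Proof.
move=> p0 d0 Ld.
have step i j k :
    (forall a b c, (c <= k \/ c = k.+1 /\ a + b < i + j)%N -> d a b c = 0) ->
    d i j k.+1 = 0.
  move=> dlow; have := congr1 (fun w => w i j k) Ld.
  rewrite /pde_op /ps_add /ps_zero (ps_mul_coef_lead p) => [|a b c lt]; last first.
    by rewrite /ps_dz dlow ?mulr0 //; lia.
  rewrite !ps_mul_coef_eq0 => [|a b c le|a b c le]; last 2 first.
  - by rewrite dlow //; left.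
  - by rewrite /ps_dx dlow ?mulr0 //; left.
  rewrite /ps_dz !addr0 => /eqP; rewrite !mulf_eq0 (negbTE p0) pnatr_eq0 /=.
  by move/eqP.
suff H k n i j : (i + j < n)%N -> d i j k = 0.
  by apply: ps_ext => i j k; exact: (H k (i + j).+1).
elim/ltn_ind: k n i j => -[|k] IHk n i j; first by rewrite d0.
elim: n i j => [//|n IHn] i j lt_ij; apply: step => a b c [le_c | [-> lt_ab]].
- exact: (IHk c le_c (a + b).+1).
- by apply: IHn; lia.
Qed.

Theorem lemma2p2 (f g h f' g' h' : ps) :
  poisson_triple f g h -> poisson_triple f' g' h' ->
  f 0%N 0%N 0%N != 0 ->
  (forall i j k, f i j k = f' i j k) ->
  (forall i j k, h i j k = h' i j k) ->
  (forall i j, g i j 0%N = g' i j 0%N) ->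
  (f, g, h) = (f', g', h').
Proof.
move=> Pfgh Pfgh' f0 eq_f eq_h eq_g0.
have Ef : f = f' by apply: ps_ext.
have Eh : h = h' by apply: ps_ext.
subst f' h'.
have Ld : pde_op f (ps_opp h) (ps_add (ps_dx h) (ps_opp (ps_dz f)))
    (ps_add g (ps_opp g')) = ps_zero.
  rewrite pde_opB !poisson_triple_pde //.
  by apply: ps_ext => i j k; rewrite /ps_add /ps_opp /ps_zero subrr.
have d0 i j : ps_add g (ps_opp g') i j 0 = 0 by rewrite /ps_add /ps_opp eq_g0 subrr.
have Eg := pde_op_eq0 f0 d0 Ld.
suff -> : g' = g by [].
apply: ps_ext => i j k; have := congr1 (fun w => w i j k) Eg.
by rewrite /ps_add /ps_opp /ps_zero => /eqP; rewrite subr_eq0 => /eqP.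
Qed.
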